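(* Let $N\ge 2$ and let $\mathbf{g}=\mathbf{1}_{[0,W-1]}\in\mathbb{R}^N$ be the rectangular window ($\mathbf{g}[n]=1$ for $0\le n\le W-1$, $\mathbf{g}[n]=0$ for $W\le n\le N-1$). Suppose (1) $N/2<W<N$, and (2) $N$ is coprime to each of the integers $2W-N,2W-N+1,\dots,W$ (which holds in particular if $N$ is prime). Then for every $\mathbf{x}\in\mathbb{C}^N$, the LS Algorithm described in the context, applied to the noise-free STFT magnitude $|\mathbf{X}[m,k]|^2$ of $\mathbf{x}$ with this window and $L=1$, outputs $e^{i\phi}\mathbf{x}$ for some $\phi\in\mathbb{R}$.
   Context: Signals and windows are indexed by $\{0,\dots,N-1\}$ and extended $N$-periodically. The STFT of $\mathbf{x}\in\mathbb{C}^N$ with window $\mathbf{g}$ and step $L=1$ is $\mathbf{X}[m,k]=\sum_{n=0}^{N-1}\mathbf{x}[n]\mathbf{g}[m-n]e^{-2\pi i kn/N}$ for $m,k=0,\dots,N-1$. The DFT of $\mathbf{v}\in\mathbb{C}^N$ is $(\mathbf{F}\mathbf{v})[k]=\sum_n \mathbf{v}[n]e^{-2\pi i kn/N}$. For $\mathbf{M}\in\mathbb{C}^{N\times N}$, $\mathrm{diag}(\mathbf{M},\ell)$ is the vector $(\mathbf{M}_{i,(i+\ell)\bmod N})_{i=0}^{N-1}$. LS Algorithm: given $\mathbf{Y}[m,k]$, (1) compute $\mathbf{Z}[m,\ell]=\sum_{k=0}^{N-1}\mathbf{Y}[m,k]e^{-2\pi i k\ell/N}$ and $\mathbf{z}_\ell=(\mathbf{Z}[m,\ell])_{m}$;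 (2) for each $\ell=0,\dots,N-1$ compute $\mathbf{x}_\ell=\frac1N\mathbf{G}_\ell^{-1}\mathbf{z}_\ell$, where $\mathbf{G}_\ell$ is the $N\times N$ circulant matrix with first column $(\mathbf{g}[m]\overline{\mathbf{g}[(m-\ell)\bmod N]})_{m=0}^{N-1}$ (computed via the DFT diagonalization of $\mathbf{G}_\ell$); (3) form $\mathbf{X}$ with $\mathrm{diag}(\mathbf{X},\ell)=\mathbf{x}_\ell$ for all $\ell$; (4) output $\sqrt{\lambda_{\max}}u_{\max}$, with $\lambda_{\max}$ the largest eigenvalue of $\mathbf{X}$ and $u_{\max}$ an associated unit eigenvector. *)

From HB Require Import structures.
From mathcomp Require Import all_boot all_order all_algebra.
From mathcomp Require Import complex.
From mathcomp Require Import reals trigo.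

Set Implicit Arguments.
Unset Strict Implicit.
Unset Printing Implicit Defensive.

Import Order.TTheory GRing.Theory Num.Theory.
Local Open Scope ring_scope.
Local Open Scope complex_scope.

Section STFT.
Variable R : realType.
Notation C := (R[i]).

Definition expi (t : R) : C := (cos t +i* sin t).

Lemma ord_gt0 (N : nat) (i : 'I_N) : (0 < N)%N.
Proof. exact: leq_ltn_trans (leq0n i) (ltn_ord i). Qed.

Definition ordm (N : nat) (i : 'I_N) (k : nat) : 'I_N :=
  Ordinal (ltn_pmod k (ord_gt0 i)).

Definition ord_sub (N : nat) (i j : 'I_N) : 'I_N := ordm i (i + (N - j))%N.
Definition ord_add (N : nat) (i j : 'I_N) : 'I_N := ordm i (i + j)%N.

Definition rect_window (N W : nat) : 'I_N -> C :=
  fun n => if (n < W)%N then 1 else 0.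

Definition dft_kernel (N k n : nat) : C :=
  expi (- (2 * pi * (k * n)%N%:R / N%:R)).

(* STFT with step L = 1: X[m,k] = sum_n x[n] g[m-n] e^{-2 pi i k n / N} *)
Definition stft (N : nat) (g x : 'I_N -> C) : 'M[C]_N :=
  \matrix_(m < N, k < N) \sum_(n < N) x n * g (ord_sub m n) * dft_kernel N k n.

Definition stft_mag2 (N : nat) (g x : 'I_N -> C) : 'M[C]_N :=
  \matrix_(m < N, k < N) (`|stft g x m k| ^+ 2).

Definition LS_Z (N : nat) (Y : 'M[C]_N) : 'M[C]_N :=
  \matrix_(m < N, l < N) \sum_(k < N) Y m k * dft_kernel N k l.

Definition LS_G (N : nat) (g : 'I_N -> C) (l : 'I_N) : 'M[C]_N :=
  \matrix_(m < N, n < N)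
     (let d := ord_sub m n in g d * (g (ord_sub d l))^*).

Definition LS_xl (N : nat) (g : 'I_N -> C) (Y : 'M[C]_N) (l : 'I_N) : 'cV[C]_N :=
  (N%:R)^-1 *: (invmx (LS_G g l) *m col l (LS_Z Y)).

(* Step (3): X with diag(X, l) = x_l, i.e. X_{i,(i+l) mod N} = x_l[i] *)
Definition LS_X (N : nat) (g : 'I_N -> C) (Y : 'M[C]_N) : 'M[C]_N :=
  \matrix_(i < N, j < N) LS_xl g Y (ord_sub j i) i ord0.

Definition largest_eigenvalue (N : nat) (M : 'M[C]_N) (lam : C) : Prop :=
  eigenvalue M lam /\ (forall mu, eigenvalue M mu -> mu <= lam).

Definition unit_eigenvector (N : nat) (M : 'M[C]_N) (lam : C) (u : 'cV[C]_N) : Prop :=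
  M *m u = lam *: u /\ \sum_(i < N) `|u i ord0| ^+ 2 = 1.

End STFT.

(** With step [L = 1], expanding [|X[m,k]|^2] and taking the DFT in [k]
  collapses, by orthogonality of the characters of [Z/NZ], to
  [z_l = N G_l y_l] with [y_l[i] = x[i] conj(x[i+l])]. So as soon as every
  [G_l] is invertible the algorithm rebuilds exactly the rank-one matrix
  [x x^*], whose top eigenvalue is [|x|^2] with eigenvector [x/|x|] up to a
  unimodular factor.
  [G_l] is circulant, hence diagonalised by the DFT; its eigenvalues are the
  DFT of [g conj(g(. - l))], the indicator of [[0, l+W-N) u [l, W)]. At a
  nonzero frequency these are sums of at most two geometric progressions in
  a nontrivial [N]-th root of unity [w], and multiplying by [w - 1] turns them
  into [w^j - 1], [w^l (w^j - 1)] or [(w^l + 1)(w^W - 1)] with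
  [2W - N <= j <= W]. None vanishes because [N] is coprime to every such [j],
  and hence odd. *)

From HB Require Import structures.
From mathcomp Require Import all_boot all_order all_algebra.
From mathcomp Require Import complex.
From mathcomp Require Import reals trigo.
From mathcomp Require Import ring lra zify.

Set Implicit Arguments.
Unset Strict Implicit.
Unset Printing Implicit Defensive.

Import Order.TTheory GRing.Theory Num.Theory.

(* [N.-1 * j] stands for [- j] modulo [N]. *)
Lemma dvdn_add_predn_mul (N a j : nat) :
  j < N -> (N %| a + N.-1 * j) = (a %% N == j).
Proof.
move=> j_ltN; have N_gt0 : 0 < N by apply: leq_ltn_trans j_ltN.
rewrite /dvdn -(mod0n N) -(eqn_modDr j) add0n -addnA addnC -mulSnr prednK //.
by rewrite mulnC modnMDl (modn_small j_ltN).
Qed.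

(* The subtraction [l + W - N] is truncated: the first interval is empty when
   [l + W <= N]. *)
Lemma window_overlap_memE (N W d l : nat) : W < N -> d < N -> l < N ->
  (d < W) && ((d + (N - l)) %% N < W) = (d < l + W - N) || (l <= d < W).
Proof.
move=> W_ltN d_ltN l_ltN; have [l_le_d|d_lt_l] := leqP l d.
  have -> : d + (N - l) = d - l + N by lia.
  by rewrite modnDr modn_small; lia.
by rewrite modn_small; lia.
Qed.

Lemma coprime2_of_interval (N a b : nat) :
  a < b -> (forall j, a <= j -> j <= b -> coprime N j) -> coprime N 2.
Proof.
move=> a_lt_b N_coprime; pose e := if odd a then a.+1 else a.
have e_even : 2 %| e by rewrite /e dvdn2; case: ifP => //= ->.
apply: coprime_dvdr e_even (N_coprime e _ _); rewrite /e; case: ifP; lia.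
Qed.

Local Open Scope ring_scope.

Lemma sum_nat_two_intervals (V : nmodType) (F : nat -> V) (N h lo W : nat) :
  (h <= lo)%N -> (lo <= N)%N -> (W <= N)%N ->
  \sum_(d < N | ((d < h) || (lo <= d < W))%N) F d
    = \sum_(0 <= d < h) F d + \sum_(lo <= d < W) F d.
Proof.
move=> h_le_lo lo_leN W_leN.
rewrite (big_nat_widen 0 h N) ?(leq_trans h_le_lo) // (big_nat_widenl lo 0) //.
rewrite (big_nat_widen 0 W N) //.
rewrite -(big_mkord (fun d => (d < h) || (lo <= d < W))%N F) (bigID (fun d => d < h)%N) /=.
congr (_ + _); apply: eq_bigl => d /=.
  by case: (d < h)%N; rewrite ?andbT ?andbF.
by case: ltnP => [d_lt_h|_]; rewrite ?andbT ?andbF //= (ltn_geF (leq_trans d_lt_h h_le_lo)).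
Qed.

Lemma geom_sum_nat (R : comPzRingType) (w : R) (a b : nat) : (a <= b)%N ->
  (w - 1) * \sum_(a <= d < b) w ^+ d = w ^+ b - w ^+ a.
Proof.
move=> a_le_b.
have prefix m : (w - 1) * \sum_(0 <= d < m) w ^+ d = w ^+ m - 1.
  by rewrite big_mkord -subrX1.
apply: (addrI (w ^+ a - 1)); rewrite -[in LHS]prefix -mulrDr -big_cat_nat //.
by rewrite prefix; ring.
Qed.

Lemma unitmx_of_inj (F : fieldType) (n : nat) (A : 'M[F]_n) :
  (forall v : 'cV_n, A *m v = 0 -> v = 0) -> A \in unitmx.
Proof.
move=> A_inj; rewrite -unitmx_tr unitmxE unitfE; apply/det0P => -[v v_neq0 vA0].
case/eqP: v_neq0; rewrite -[v]trmxK (A_inj v^T) ?trmx0 //.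
by rewrite -(trmxK A) -trmx_mul vA0 trmx0.
Qed.

Section RootsOfUnity.
Variables (F : fieldType) (N : nat) (z : F).
Hypothesis z_prim : N.-primitive_root z.

Lemma sum_prim_root_expM (a : nat) :
  \sum_(k < N) z ^+ (k * a) = if (N %| a)%N then N%:R else 0.
Proof.
under eq_bigr do rewrite mulnC exprM.
rewrite (prim_order_dvd z_prim); have [za1|za_neq1] := eqVneq.
  by under eq_bigr do rewrite za1 expr1n; rewrite sumr_const card_ord.
apply: (mulfI (_ : z ^+ a - 1 != 0)); first by rewrite subr_eq0.
by rewrite mulr0 -subrX1 -exprM mulnC exprM (prim_expr_order z_prim) expr1n subrr.
Qed.

Lemma prim_root_expM_neq1 (k j : nat) :
  (0 < k < N)%N -> coprime N j -> (z ^+ k) ^+ j != 1.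
Proof.
case/andP=> k_gt0 k_ltN N_coprime_j.
rewrite -exprM -(prim_order_dvd z_prim) Gauss_dvdl //.
by apply/negP => /(dvdn_leq k_gt0); rewrite leqNgt k_ltN.
Qed.

End RootsOfUnity.

Section Circulant.
Variables (F : fieldType) (n : nat).
Local Notation N := n.+2.
Variable z : F.
Hypotheses (z_prim : N.-primitive_root z) (N_neq0 : N%:R != 0 :> F).

Definition dft (c : 'I_N -> F) (k : nat) : F := \sum_(a < N) c a * z ^+ (k * a).

Definition circulant (c : 'I_N -> F) : 'M[F]_N := \matrix_(i, j) c (i - j).

Lemma prim_root_expM_addZp k (a b : 'I_N) :
  z ^+ (k * (a + b)%R) = z ^+ (k * a) * z ^+ (k * b).
Proof.
rewrite -exprD -mulnDr !(mulnC k) !exprM; congr (_ ^+ k).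
exact: expr_mod (prim_expr_order z_prim).
Qed.

Lemma dft_inj (v : 'I_N -> F) : (forall k : 'I_N, dft v k = 0) -> forall j, v j = 0.
Proof.
move=> v_dft0 j; apply: (mulIf N_neq0); rewrite mul0r.
have -> : v j * N%:R = \sum_(i < N) v i * \sum_(k < N) z ^+ (k * (i + N.-1 * j)).
  under eq_bigr => i _ do rewrite sum_prim_root_expM // dvdn_add_predn_mul // modn_small //.
  rewrite (bigD1 j) //= eqxx big1 ?addr0 // => i.
  by rewrite -val_eqE => /negbTE ->; rewrite mulr0.
under eq_bigr do rewrite big_distrr /=.
rewrite exchange_big big1 //= => k _.
under eq_bigr do rewrite mulnDr exprD mulrA.
by rewrite -big_distrl /= -/(dft v k) v_dft0 mul0r.
Qed.

Lemma dft_circulant_mul (c : 'I_N -> F) (v : 'cV_N) k :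
  dft (fun i => (circulant c *m v) i 0) k = dft c k * dft (fun i => v i 0) k.
Proof.
rewrite /dft; under eq_bigr do rewrite !mxE big_distrl /=.
rewrite exchange_big big_distrr /=; apply: eq_bigr => j _.
rewrite big_distrl /= (reindex_inj (addIr j)); apply: eq_bigr => a _.
by rewrite !mxE addrK prim_root_expM_addZp; ring.
Qed.

Lemma circulant_unit (c : 'I_N -> F) :
  (forall k : 'I_N, dft c k != 0) -> circulant c \in unitmx.
Proof.
move=> c_dft_neq0; apply: unitmx_of_inj => v Cv0.
suff dft_v0 (k : 'I_N) : dft (fun i => v i 0) k = 0.
  by apply/colP => j; rewrite mxE; apply: dft_inj dft_v0 j.
apply: (mulfI (c_dft_neq0 k)); rewrite -dft_circulant_mul mulr0 Cv0.
by rewrite /dft big1 // => i _; rewrite mxE mul0r.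
Qed.

End Circulant.

Section TwoArcs.
Variables (F : numFieldType) (w : F) (N W : nat).
Hypotheses (W_ltN : (W < N)%N) (w_expN : w ^+ N = 1).
Hypothesis w_exp_neq1 : forall j, (W + W - N <= j)%N -> (j <= W)%N -> w ^+ j != 1.
(* This is where the oddness of [N] enters. *)
Hypothesis w_exp_sqr : forall j, (w ^+ j) ^+ 2 = 1 -> w ^+ j = 1.

Lemma sum_two_arcs_neq0 (l : nat) : (l < N)%N ->
  \sum_(0 <= d < l + W - N) w ^+ d + \sum_(l <= d < W) w ^+ d != 0.
Proof.
move=> l_ltN.
have w_neq0 : w != 0.
  have : w ^+ N == 1 by rewrite w_expN.
  by apply: contraTneq => ->; rewrite expr0n gtn_eqF ?(leq_ltn_trans _ W_ltN) //= eq_sym oner_eq0.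
suff : (w - 1) * (\sum_(0 <= d < l + W - N) w ^+ d + \sum_(l <= d < W) w ^+ d) != 0.
  by rewrite mulf_eq0 negb_or => /andP[].
have [W_le_l|l_ltW] := leqP W l.
  rewrite (big_geq (m := l)) // addr0 geom_sum_nat // subr_eq0 w_exp_neq1 //; lia.
have [lW_leN|N_lt_lW] := leqP (l + W) N.
  have -> : (l + W - N = 0)%N by lia.
  rewrite big_geq // add0r (geom_sum_nat w (ltnW l_ltW)).
  have -> : w ^+ W - w ^+ l = w ^+ l * (w ^+ (W - l) - 1).
    by rewrite mulrBr mulr1 -exprD subnKC // (ltnW l_ltW).
  rewrite mulf_neq0 ?expf_neq0 // subr_eq0 w_exp_neq1 //; lia.
rewrite mulrDr (geom_sum_nat w (ltnW l_ltW)) geom_sum_nat; last by lia.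
have -> : w ^+ (l + W - N) = w ^+ l * w ^+ W.
  by rewrite -exprD -{2}(subnK (ltnW N_lt_lW)) exprD w_expN mulr1.
have -> : w ^+ l * w ^+ W - 1 + (w ^+ W - w ^+ l) = (w ^+ l + 1) * (w ^+ W - 1) by ring.
have wW_neq1 : w ^+ W != 1 by apply: w_exp_neq1; lia.
rewrite mulf_neq0 ?subr_eq0 // addr_eq0; apply/eqP => wl.
have := @w_exp_sqr l; rewrite wl sqrrN expr1n => /(_ erefl) /eqP.
by rewrite eq_sym -subr_eq0 opprK -(natrD _ 1 1) pnatr_eq0.
Qed.

End TwoArcs.

Section WindowOverlap.
Variables (F : numFieldType) (n W : nat).
Local Notation N := n.+2.
Variable z : F.
Hypotheses (z_prim : N.-primitive_root z) (W_bounds : (N < W + W)%N) (W_ltN : (W < N)%N).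
Hypothesis N_coprime : forall j, (W + W - N <= j)%N -> (j <= W)%N -> coprime N j.

Definition window_overlap (l d : 'I_N) : F :=
  if (d < W)%N && (ord_sub d l < W)%N then 1 else 0.

Lemma dft_window_overlapE (l : 'I_N) k :
  dft z (window_overlap l) k
    = \sum_(0 <= d < l + W - N) (z ^+ k) ^+ d + \sum_(l <= d < W) (z ^+ k) ^+ d.
Proof.
have l_ltN := ltn_ord l.
rewrite /dft (eq_bigr (fun d : 'I_N =>
    if ((d < l + W - N) || (l <= d < W))%N then (z ^+ k) ^+ d else 0)) => [|d _].
  rewrite -big_mkcond sum_nat_two_intervals ?(ltnW l_ltN) ?(ltnW W_ltN) //.
  by rewrite leq_subLR addnC leq_add2r (ltnW W_ltN).
rewrite /window_overlap /= window_overlap_memE // exprM.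
by case: ifP; rewrite ?mul1r ?mul0r.
Qed.

Lemma dft_window_overlap_neq0 (l k : 'I_N) : dft z (window_overlap l) k != 0.
Proof.
have l_ltN := ltn_ord l.
rewrite dft_window_overlapE; have [->|k_gt0] := posnP k.
  have sum1 a b : \sum_(a <= d < b) (1 : F) ^+ d = (b - a)%:R.
    by rewrite (eq_bigr (fun=> 1)) ?sumr_const_nat // => d _; rewrite expr1n.
  by rewrite expr0 !sum1 -natrD pnatr_eq0 -lt0n; lia.
have N_coprime2 : coprime N 2.
  by apply: (coprime2_of_interval (a := W + W - N) (b := W)) => //; lia.
apply: sum_two_arcs_neq0 => //.
- by rewrite -exprM mulnC exprM (prim_expr_order z_prim) expr1n.
- move=> j j_ge j_le; apply: (prim_root_expM_neq1 z_prim _ (N_coprime j_ge j_le)).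
  by rewrite k_gt0 ltn_ord.
- move=> j /eqP sqr1; apply/eqP; move: sqr1.
  by rewrite -!exprM -!(prim_order_dvd z_prim) mulnA Gauss_dvdl.
Qed.

End WindowOverlap.

Section Expi.
Variable R : realType.
Local Notation C := R[i].

Lemma expi0 : expi (0 : R) = 1.
Proof. by rewrite /expi cos0 sin0. Qed.

Lemma expiD (a b : R) : expi (a + b) = expi a * expi b.
Proof.
rewrite /expi cosD sinD; apply/eqP; rewrite eq_complex /=.
by apply/andP; split; apply/eqP; ring.
Qed.

Lemma expiMn (t : R) m : expi (t *+ m) = expi t ^+ m.
Proof.
elim: m => [|m IHm]; first by rewrite mulr0n expr0 expi0.
by rewrite mulrS expiD IHm exprS.
Qed.

Lemma expi_mulC (t : R) : expi t * (expi t)^* = 1.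
Proof.
rewrite /expi /=; apply/eqP; rewrite eq_complex /=.
by apply/andP; split; apply/eqP; [rewrite -(cos2Dsin2 t)|]; ring.
Qed.

Lemma expi_onto (z : C) : z * z^* = 1 -> exists phi : R, expi phi = z.
Proof.
case: z => a b; move/eqP; rewrite eq_complex /= => /andP[/eqP ab1 _].
have {}ab1 : a ^+ 2 + b ^+ 2 = 1 by rewrite -ab1; ring.
have a_bound : -1 <= a <= 1 by apply/andP; split; nra.
have sin_acosa : Num.sqrt (1 - a ^+ 2) = `|b|.
  by rewrite -ab1 (addrC (a ^+ 2)) addrK sqrtr_sqr.
have [b_ge0|b_lt0] := lerP 0 b.
  by exists (acos a); rewrite /expi acosK ?sin_acos // sin_acosa ger0_norm.
exists (- acos a).
by rewrite /expi cosN sinN acosK ?sin_acos // sin_acosa ltr0_norm ?opprK.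
Qed.

Definition omega (N : nat) : C := expi (- (2 * pi / N%:R)).

Lemma dft_kernelE N k m : dft_kernel R N k m = omega N ^+ (k * m).
Proof. by rewrite /dft_kernel /omega -expiMn -mulr_natr; congr expi; ring. Qed.

Variable N : nat.
Hypothesis N_gt0 : (0 < N)%N.

Lemma omega_expN : omega N ^+ N = 1.
Proof.
have N_neq0 : (N%:R : R) != 0 by rewrite pnatr_eq0 -lt0n.
rewrite /omega -expiMn.
have -> : (- (2 * pi / N%:R)) *+ N = - (2 * pi) :> R.
  by rewrite -(mulr_natr (- (2 * pi / N%:R))) mulNr mulfVK.
by rewrite /expi cosN sinN mulr_natl cos2pi sin2pi oppr0.
Qed.

Lemma omega_exp_neq1 k : (0 < k < N)%N -> omega N ^+ k != 1.
Proof.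
case/andP=> k_gt0 k_ltN; rewrite /omega -expiMn /expi.
apply/negP; rewrite eq_complex /= => /andP[/eqP cos1 _].
pose t : R := pi * k%:R / N%:R.
have angleE : (- (2 * pi / N%:R)) *+ k = - (t + t) by rewrite /t -mulr_natr; ring.
have sin_t_gt0 : 0 < sin t.
  apply: sin_gt0_pi; apply/andP; split.
    by rewrite /t divr_gt0 ?mulr_gt0 ?pi_gt0 ?ltr0n.
  by rewrite /t ltr_pdivrMr ?ltr0n // ltr_pM2l ?pi_gt0 // ltr_nat.
(* [cos (t + t) = 1 - 2 sin t ^ 2 < 1] *)
move: cos1; rewrite angleE cosN cosD; have := cos2Dsin2 t; nra.
Qed.

Lemma omega_prim : N.-primitive_root (omega N).
Proof.
have [m m_prim m_dvdN] := prim_order_exists N_gt0 omega_expN.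
have m_gt0 := prim_order_gt0 m_prim.
have [m_ltN|m_geN] := ltnP m N.
  by move: (omega_exp_neq1 (k := m)); rewrite m_gt0 m_ltN (prim_expr_order m_prim) eqxx; move/(_ isT).
suff m_eqN : m = N by rewrite -{1}m_eqN.
by apply/eqP; rewrite eqn_leq m_geN dvdn_leq.
Qed.

Lemma omega_conj : (omega N)^* = omega N ^+ N.-1.
Proof.
have omega_neq0 : omega N != 0.
  have : omega N ^+ N == 1 by rewrite omega_expN.
  by apply: contraTneq => ->; rewrite expr0n gtn_eqF //= eq_sym oner_eq0.
apply: (mulfI omega_neq0); rewrite [LHS]expi_mulC -exprS prednK //.
by rewrite omega_expN.
Qed.

End Expi.

Lemma unit_vector_neq0 (K : numDomainType) (N : nat) (u : 'cV[K]_N) :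
  \sum_i `|u i 0| ^+ 2 = 1 -> exists i, u i 0 != 0.
Proof.
move=> u_unit; apply/existsP; apply: contraT; rewrite negb_exists => /forallP u0.
move: u_unit; rewrite big1 => [/eqP|i _]; first by rewrite eq_sym oner_eq0.
by move/negPn: (u0 i) => /eqP ->; rewrite normr0 expr0n.
Qed.

Section RankOne.
Variables (R : realType) (N : nat) (x : 'I_N -> R[i]).
Local Notation C := R[i].

Definition outer : 'M[C]_N := \matrix_(i, j) (x i * (x j)^*).

Lemma outer_mulmx (u : 'cV[C]_N) i :
  (outer *m u) i 0 = x i * \sum_j (x j)^* * u j 0.
Proof.
by rewrite !mxE big_distrr /=; apply: eq_bigr => j _; rewrite mxE mulrA.
Qed.

Lemma eigenvalue_outer_norm : (exists i, x i != 0) ->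
  eigenvalue outer (\sum_i x i * (x i)^*).
Proof.
case=> i0 xi0_neq0; apply/eigenvalueP; exists (\row_j (x j)^*).
  apply/rowP => j; rewrite !mxE big_distrl /=; apply: eq_bigr => i _.
  by rewrite !mxE; ring.
by apply/eqP => /rowP /(_ i0); rewrite !mxE => /eqP; rewrite conjC_eq0 (negbTE xi0_neq0).
Qed.

Lemma outer_top_eigenvector (lam : C) (u : 'cV[C]_N) :
  largest_eigenvalue outer lam -> unit_eigenvector outer lam u ->
  exists phi : R, forall k, sqrtC lam * u k 0 = expi phi * x k.
Proof.
move=> [_ lam_max] [u_eig u_unit].
set c := \sum_j (x j)^* * u j 0.
have eig_i i : x i * c = lam * u i 0.
  by move/matrixP: u_eig => /(_ i 0); rewrite outer_mulmx mxE.
have [i0 u_i0] := unit_vector_neq0 u_unit.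
have [k0 xk0_neq0|x0] := pickP (fun k => x k != 0); last first.
  have x_eq0 k : x k = 0 by apply/eqP; move/negbFE: (x0 k).
  have lam0 : lam = 0.
    apply/eqP; move: (eig_i i0); rewrite x_eq0 mul0r => /esym/eqP.
    by rewrite mulf_eq0 (negbTE u_i0) orbF.
  by exists 0 => k; rewrite lam0 sqrtC0 mul0r x_eq0 mulr0.
set s := \sum_i x i * (x i)^*.
have s_gt0 : 0 < s.
  rewrite /s (bigD1 k0) //= -normCK ltr_wpDr ?exprn_gt0 ?normr_gt0 //.
  by apply: sumr_ge0 => i _; rewrite -normCK exprn_ge0.
have s_le_lam : s <= lam by apply/lam_max/eigenvalue_outer_norm; exists k0.
have lam_gt0 : 0 < lam := lt_le_trans s_gt0 s_le_lam.
have lam_neq0 : lam != 0 := lt0r_neq0 lam_gt0.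
have u_i i : u i 0 = x i * (c / lam) by rewrite mulrA eig_i mulrC mulKf.
have c_neq0 : c != 0.
  by apply: contraNneq u_i0 => c0; rewrite u_i c0 mul0r mulr0.
have lam_s : lam = s.
  apply: (mulIf c_neq0); rewrite {1}/c /s big_distrr big_distrl /=.
  apply: eq_bigr => i _.
  by rewrite mulrCA -eig_i; ring.
have [phi phiE] : exists phi : R, expi phi = sqrtC lam * (c / lam).
  apply: expi_onto; rewrite rmorphM /= -[in RHS]u_unit.
  have -> : (sqrtC lam)^* = sqrtC lam by apply/CrealP; rewrite realE sqrtC_ge0 ltW.
  under eq_bigr do rewrite u_i normCK rmorphM /=.
  rewrite mulrACA -expr2 sqrtCK {1}lam_s /s big_distrl /=.
  by apply: eq_bigr => i _; rewrite [RHS]mulrACA.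
by exists phi => k; rewrite phiE u_i; ring.
Qed.
End RankOne.

Section Measurements.
Variables (R : realType) (n : nat).
Local Notation C := R[i].
Local Notation N := n.+2.
Local Notation omega := (omega R N).

Lemma ord_subE (i j : 'I_N) : ord_sub i j = i - j.
Proof.
apply: val_inj => /=; case: j => [[|j] j_ltN] /=.
  by rewrite subn0 modnDr modnn addn0.
by rewrite (@modn_small (N - j.+1)) //; lia.
Qed.

Lemma omega_conjX a : (omega ^+ a)^* = omega ^+ (N.-1 * a).
Proof. by rewrite exprM -omega_conj // rmorphXn. Qed.

Definition lag_product (x : 'I_N -> C) (l : 'I_N) : 'cV[C]_N :=
  \col_i (x i * (x (i + l))^*).

Lemma LS_Z_stft_mag2 (g x : 'I_N -> C) (l : 'I_N) :
  col l (LS_Z (stft_mag2 g x)) = N%:R *: (LS_G g l *m lag_product x l).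
Proof.
apply/colP => m; rewrite !mxE.
under eq_bigr => k _ do rewrite !mxE normCK rmorph_sum mulr_suml big_distrl /=.
under eq_bigr => k _ do under eq_bigr => j _ do rewrite mulr_sumr big_distrl /=.
rewrite exchange_big /=.
under eq_bigr => j _ do rewrite exchange_big /=.
rewrite big_distrr /=; apply: eq_bigr => j _.
have collapse (j' : 'I_N) : \sum_(k < N) x j * g (ord_sub m j) * dft_kernel R N k j *
    (x j' * g (ord_sub m j') * dft_kernel R N k j')^* * dft_kernel R N k l
  = x j * g (ord_sub m j) * (x j' * g (ord_sub m j'))^* *
    (if j' == j + l then N%:R else 0).
  transitivity (x j * g (ord_sub m j) * (x j' * g (ord_sub m j'))^* *
      \sum_(k < N) omega ^+ (k * (j + l + N.-1 * j'))).
    rewrite big_distrr /=; apply: eq_bigr => k _.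
    rewrite !dft_kernelE rmorphM /= omega_conjX.
    have -> : (k * (j + l + N.-1 * j') = k * j + N.-1 * (k * j') + k * l)%N by ring.
    by rewrite !exprD; ring.
  by rewrite (sum_prim_root_expM (omega_prim R (ltn0Sn _))) dvdn_add_predn_mul // eq_sym.
under eq_bigr do rewrite collapse.
rewrite (bigD1 (j + l)) //= eqxx big1 => [|j' /negbTE ->]; last by rewrite mulr0.
rewrite addr0 !mxE /= !ord_subE opprD addrA rmorphM /=; ring.
Qed.

Lemma LS_G_rect_window (W : nat) (l : 'I_N) :
  LS_G (@rect_window R N W) l = circulant (window_overlap C W l).
Proof.
apply/matrixP => i j; rewrite !mxE /= ord_subE /rect_window /window_overlap.
by case: (_ < W)%N; case: (_ < W)%N; rewrite /= ?conjC1 ?conjC0 ?mulr1 ?mulr0.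
Qed.

Lemma LS_X_stft_mag2 (g x : 'I_N -> C) :
  (forall l, LS_G g l \in unitmx) -> LS_X g (stft_mag2 g x) = outer x.
Proof.
move=> G_unit; apply/matrixP => i j.
rewrite [LHS]mxE /LS_xl LS_Z_stft_mag2 -scalemxAr mulKmx // scalerA mulVf ?pnatr_eq0 //.
by rewrite scale1r !mxE ord_subE addrC subrK.
Qed.

End Measurements.

Local Open Scope complex_scope.

Theorem corollary1 (R : realType) (N W : nat) (x : 'I_N -> R[i]) :
  (2 <= N)%N ->
  (N < W + W)%N -> (W < N)%N ->
  (forall j : nat, (W + W - N <= j)%N -> (j <= W)%N -> coprime N j) ->
  let g := @rect_window R N W in
  let Y := stft_mag2 g x in
  (forall l : 'I_N, LS_G g l \in unitmx) /\
  (forall (lam : R[i]) (u : 'cV[R[i]]_N),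
      largest_eigenvalue (LS_X g Y) lam ->
      unit_eigenvector (LS_X g Y) lam u ->
      exists phi : R, forall n : 'I_N, sqrtC lam * u n ord0 = expi phi * x n).
Proof.
case: N x => [|[|n]] x // _ W_bounds W_ltN N_coprime g Y.
have prim : n.+2.-primitive_root (omega R n.+2) := omega_prim R (ltn0Sn _).
have G_unit l : LS_G g l \in unitmx.
  rewrite /g LS_G_rect_window; apply: (circulant_unit prim); first by rewrite pnatr_eq0.
  exact: dft_window_overlap_neq0 prim W_bounds W_ltN N_coprime l.
split=> // lam u; rewrite /Y LS_X_stft_mag2 //.
exact: outer_top_eigenvector.
Qed.
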